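(* Let $k\ge 2$ be an integer. For every positive integer $n$, deterministically (for every realization), the random $k$-tree $G(n)$ has clustering coefficient at least $1/2$.
   Context: Random $k$-tree process: $G(0)$ is a clique on $k$ vertices; for $t\ge1$, $G(t)$ is obtained from $G(t-1)$ by choosing a $k$-clique of $G(t-1)$ uniformly at random, creating a new vertex, and joining it to all vertices of the chosen clique. The clustering coefficient of a graph $G$ is $cc(G)=\frac{1}{|V(G)|}\sum_{u\in V(G)}\frac{|\langle N(u)\rangle|}{\binom{\deg(u)}{2}}$, where $|\langle N(u)\rangle|$ is the number of edges $xy$ with both $x,y$ neighbors of $u$. *)

From mathcomp Require Import all_boot all_order all_algebra.
Set Implicit Arguments. Unset Strict Implicit. Unset Printing Implicit Defensive.
Import Order.TTheory GRing.Theory Num.Theory.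

(* A realization of the random k-tree process is encoded by the sequence of
   chosen cliques C : nat -> seq nat, where C t (t >= 1) is the k-clique of
   G(t-1) chosen at step t.  Vertices of G(t) are 0, ..., k+t-1; the vertices
   0..k-1 form the initial clique G(0), and vertex k+t-1 is the vertex created
   at step t, joined to every vertex of C t. *)

Definition ktree_adj (k : nat) (C : nat -> seq nat) (t : nat) : rel nat :=
  fun x y =>
    [&& x < k + t, y < k + t, x != y &
     [|| (x < k) && (y < k),
         [&& k <= x, y < x & y \in C (x - k).+1] |
         [&& k <= y, x < y & x \in C (y - k).+1] ]].

Definition is_kclique (k : nat) (C : nat -> seq nat) (t : nat) (S : seq nat) : Prop :=
  [/\ uniq S, size S = k, all (fun x => x < k + t) S &
      forall x y, x \in S -> y \in S -> x != y -> ktree_adj k C t x y].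

Definition valid_realization (k : nat) (C : nat -> seq nat) (n : nat) : Prop :=
  forall t, 1 <= t <= n -> is_kclique k C t.-1 (C t).

(* Clustering coefficient of a graph on vertex set {0,...,N-1} with
   (symmetric) adjacency relation e:
   cc = 1/N * sum_u |<N(u)>| / binom(deg u, 2).
   (Division by 0 yields 0 in MathComp; it never occurs in k-trees, k>=2.) *)
Definition nbr_edges (N : nat) (e : rel nat) (u : 'I_N) : nat :=
  #|[set p : 'I_N * 'I_N |
       [&& (p.1 < p.2)%N, e u p.1, e u p.2 & e p.1 p.2]]|.

Definition degree (N : nat) (e : rel nat) (u : 'I_N) : nat :=
  #|[set v : 'I_N | e u v]|.

Definition clustering_coeff (N : nat) (e : rel nat) : rat :=
  (N%:R)^-1 * \sum_(u < N) ((nbr_edges e u)%:R / ('C(degree e u, 2))%:R).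

From mathcomp Require Import all_boot all_order all_algebra zify ring lra.
Set Implicit Arguments. Unset Strict Implicit. Unset Printing Implicit Defensive.
Import Order.TTheory GRing.Theory Num.Theory.

(* After the first step every vertex u of the k-tree has degree at least k, and
   its neighbourhood spans at least (k-1) deg u - C(k,2) edges: a new vertex
   starts with degree k and a k-clique as neighbourhood, and every later step
   that attaches to u raises deg u by 1 and the edge count by k-1.  This gives
   the local bound |<N(u)>| / C(deg u, 2) >= 1 - deg u / 4k, and since the
   degrees sum to k(k-1) + 2kn <= 2k(k+n), averaging over the k+n vertices
   yields cc >= 1/2. *)

Lemma leq_b2n (a b : bool) : (a -> b) -> (a : nat) <= b.
Proof. by case: a; case: b => // /(_ isT). Qed.

Lemma leq_b2n_add (a b c : bool) : (a -> c) -> (b -> c) -> ~~ (a && b) ->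
  (a : nat) + b <= c.
Proof. by case: a; case: b; case: c => // /(_ isT). Qed.

Lemma sum_mem_nat (M : nat) (S : seq nat) : uniq S -> all (fun x => x < M) S ->
  \sum_(0 <= x < M) (x \in S : nat) = size S.
Proof.
move=> uS /allP SM; rewrite -big_mkcond /= -big_filter sum1_size.
apply/perm_size/uniq_perm; rewrite ?filter_uniq ?iota_uniq // => x.
by rewrite mem_filter mem_iota /= subn0; case xS: (x \in S); rewrite // SM.
Qed.

Lemma sum_eq_nat (M w : nat) : w < M -> \sum_(0 <= x < M) (x == w : nat) = 1.
Proof.
move=> wM; rewrite -[RHS](@sum_mem_nat M [:: w]) /= ?wM //.
by apply: eq_bigr => x _; rewrite mem_seq1.
Qed.

Lemma sum_pairs_bin2 (M : nat) (P : pred nat) :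
  \sum_(0 <= x < M) \sum_(0 <= y < M) ([&& x < y, P x & P y] : nat)
  = 'C(\sum_(0 <= x < M) (P x : nat), 2).
Proof.
elim: M => [|M IH]; first by rewrite !big_geq.
rewrite !big_nat_recr //=.
have -> : \sum_(0 <= y < M) ([&& M < y, P M & P y] : nat) = 0.
  by rewrite big_nat big1 // => y /andP [_ hy]; rewrite ltnNge (ltnW hy).
rewrite ltnn /= !addn0.
under eq_bigr => i _ do rewrite big_nat_recr //=.
rewrite big_split /= IH.
have -> : \sum_(0 <= i < M) ([&& i < M, P i & P M] : nat)
        = P M * \sum_(0 <= i < M) (P i : nat).
  rewrite big_distrr /= big_nat [RHS]big_nat; apply: eq_bigr => i /andP [_ hi].
  by rewrite hi /=; case: (P i); case: (P M).
by case: (P M); rewrite ?mul1n ?mul0n ?addn0 // addn1 binS bin1.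
Qed.

Lemma bin2_mul2 n : 'C(n, 2) * 2 = n * n.-1.
Proof. by rewrite bin2 muln2 halfK oddM; case: n => //= n; rewrite andNb subn0. Qed.

Lemma degree_sum (N : nat) (e : rel nat) (u : 'I_N) :
  degree e u = \sum_(0 <= v < N) (e u v : nat).
Proof.
rewrite /degree big_mkord -sum1dep_card big_mkcond /=.
by apply: eq_bigr => v _; case: (e u v).
Qed.

Lemma nbr_edges_sum (N : nat) (e : rel nat) (u : 'I_N) :
  nbr_edges e u = \sum_(0 <= x < N) \sum_(0 <= y < N)
    ([&& x < y, e u x, e u y & e x y] : nat).
Proof.
rewrite /nbr_edges -sum1dep_card big_mkcond /= big_mkord.
under [RHS]eq_bigr => x _ do rewrite big_mkord.
by rewrite pair_bigA /=; apply: eq_bigr => p _; case: (_ && _).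
Qed.

Section RandomKTree.

Variables (k : nat) (C : nat -> seq nat) (n : nat).
Hypothesis hC : valid_realization k C n.

Local Notation adj t := (ktree_adj k C t).

Definition deg t u := \sum_(0 <= v < k + n) (adj t u v : nat).

Definition link t u := \sum_(0 <= x < k + n) \sum_(0 <= y < k + n)
  ([&& x < y, adj t u x, adj t u y & adj t x y] : nat).

Lemma adj_lt t x y : adj t x y -> (x < k + t) && (y < k + t).
Proof. by case/and4P => -> ->. Qed.

Lemma adj0 u v : adj 0 u v = [&& u < k, v < k & u != v].
Proof. by rewrite /ktree_adj addn0; case: (u < k); case: (v < k); rewrite //= andbT. Qed.

Section Step.

Variable t : nat.
Hypothesis ltn_t : t < n.

Lemma clique_step : [/\ uniq (C t.+1), size (C t.+1) = k,
  {in C t.+1, forall z, z < k + t} &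
  {in C t.+1 &, forall x y, x != y -> adj t x y}].
Proof.
have [uS szS /allP aS cl] := hC (ltn_t : 0 < t.+1 <= n).
by split.
Qed.

Lemma clique_in_range : all (fun x => x < k + n) (C t.+1).
Proof. by have [_ _ lt_S _] := clique_step; apply/allP => z /lt_S; lia. Qed.

Lemma new_vertex_notin : (k + t \in C t.+1) = false.
Proof.
have [_ _ lt_S _] := clique_step.
by apply/negbTE/negP => /lt_S; rewrite ltnn.
Qed.

Lemma adj_step x y : adj t.+1 x y =
  [|| adj t x y, (x == k + t) && (y \in C t.+1) | (y == k + t) && (x \in C t.+1)].
Proof.
have [_ _ lt_S _] := clique_step; rewrite /ktree_adj addnS.
have hk : (k + t < k) = false by rewrite ltnNge leq_addr.
have [hx|hx|->] := ltngtP x (k + t); have [hy|hy|->] := ltngtP y (k + t).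
- by rewrite !ltnS (ltnW hx) (ltnW hy) /= !orbF.
- by rewrite (ltnS y) (leqNgt y) hy /= !andbF.
- by rewrite ltnS (ltnW hx) (ltn_eqF hx) hx addKn leq_addr hk
    (ltnNge (k + t) x) (ltnW hx) /= !andbF /= ltnSn.
- by rewrite (ltnS x) (leqNgt x) hx.
- by rewrite (ltnS x) (leqNgt x) hx.
- rewrite (ltnS x) (leqNgt x) hx.
  by case: (x \in _) (@lt_S x) => // /(_ isT); rewrite ltnNge (ltnW hx).
- by rewrite ltnSn (ltnS y) (ltnW hy) hk addKn leq_addr /= !andbF /= orbF.
- rewrite (ltnS y) (leqNgt y) hy /= !andbF /= orbF.
  by case: (y \in _) (@lt_S y) => // /(_ isT); rewrite ltnNge (ltnW hy).
- by rewrite new_vertex_notin /= !andbF.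
Qed.

Lemma adj_succ x y : adj t x y -> adj t.+1 x y.
Proof. by move=> h; rewrite adj_step h. Qed.

Lemma deg_step u : deg t.+1 u = deg t u + (u == k + t) * k + (u \in C t.+1).
Proof.
have [uS szS _ _] := clique_step.
transitivity (\sum_(0 <= v < k + n) ((adj t u v : nat)
   + (u == k + t) * (v \in C t.+1) + (v == k + t) * (u \in C t.+1))).
  apply: eq_bigr => v _; rewrite adj_step.
  case h: (adj t u v).
    by have /andP [hu hv] := adj_lt h; rewrite (ltn_eqF hu) (ltn_eqF hv).
  case: (eqVneq u (k + t)) => [->|hu]; case: (eqVneq v (k + t)) => [->|hv];
    rewrite ?new_vertex_notin ?eqxx ?(negbTE hu) ?(negbTE hv) /= ?andbF ?orbF;
    by case: (_ \in C t.+1).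
rewrite !big_split /= -big_distrr -big_distrl /=.
by rewrite (sum_mem_nat uS clique_in_range) szS sum_eq_nat ?mul1n //; lia.
Qed.

Lemma link_succ u : link t u <= link t.+1 u.
Proof.
apply: leq_sum => x _; apply: leq_sum => y _; apply: leq_b2n.
by case/and4P => -> /adj_succ -> /adj_succ -> /adj_succ ->.
Qed.

Lemma link_step u : u \in C t.+1 -> link t u + k.-1 <= link t.+1 u.
Proof.
move=> uS; have [uniqS szS lt_S cl] := clique_step.
have RM : all (fun x => x < k + n) (rem u (C t.+1)).
  by apply/allP => z /mem_rem /lt_S; lia.
rewrite -[in k.-1]szS -(size_rem uS) -(sum_mem_nat (rem_uniq u uniqS) RM).
have -> : \sum_(0 <= x < k + n) (x \in rem u (C t.+1) : nat)
   = \sum_(0 <= x < k + n) \sum_(0 <= y < k + n)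
       (((y == k + t) && (x \in rem u (C t.+1))) : nat).
  apply: eq_bigr => x _; under eq_bigr => y _ do rewrite -mulnb.
  by rewrite -big_distrl /= sum_eq_nat ?mul1n //; lia.
rewrite /link -big_split /=; apply: leq_sum => x _.
rewrite -big_split /=; apply: leq_sum => y _; apply: leq_b2n_add.
- by case/and4P => -> /adj_succ -> /adj_succ -> /adj_succ ->.
- case/andP => /eqP -> /[dup] /mem_rem xS.
  rewrite (mem_rem_uniq _ uniqS) => /andP [xu _].
  by rewrite (lt_S _ xS) !adj_step eqxx uS xS !orbT andbT cl // eq_sym.
- apply/negP => /andP [/and4P [_ _ h _] /andP [/eqP hy _]].
  by move: (adj_lt h); rewrite hy ltnn andbF.
Qed.

Lemma link_new_vertex : 'C(k, 2) <= link t.+1 (k + t).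
Proof.
have [uniqS szS _ cl] := clique_step.
rewrite -[in 'C(k, 2)]szS -(sum_mem_nat uniqS clique_in_range) -sum_pairs_bin2.
apply: leq_sum => x _; apply: leq_sum => y _; apply: leq_b2n.
case/and3P => xy xS yS.
by rewrite xy !adj_step eqxx xS yS /= !orbT cl // ltn_eqF.
Qed.

End Step.

Lemma adj0_mem u v : u < k -> adj 0 u v = (v \in rem u (iota 0 k)).
Proof.
move=> hu; rewrite adj0 (mem_rem_uniq _ (iota_uniq 0 k)) !inE mem_iota.
by rewrite hu add0n /= andbC eq_sym.
Qed.

Lemma deg0 u : u < k -> deg 0 u = k.-1.
Proof.
move=> hu; rewrite /deg; under eq_bigr => v _ do rewrite adj0_mem //.
rewrite sum_mem_nat ?rem_uniq ?iota_uniq ?size_rem ?mem_iota ?size_iota //.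
by apply/allP => z /mem_rem; rewrite mem_iota; lia.
Qed.

Lemma link0 u : u < k -> 'C(k.-1, 2) <= link 0 u.
Proof.
move=> hu; rewrite -(deg0 hu) /deg -sum_pairs_bin2.
apply: leq_sum => x _; apply: leq_sum => y _; apply: leq_b2n.
by case/and3P=> xy ux uy; rewrite xy ux uy adj0 (ltn_eqF xy); move: ux uy; rewrite !adj0; lia.
Qed.

Lemma deg_out t u : k + t <= u -> deg t u = 0.
Proof.
move=> hu; rewrite /deg big1 // => v _.
by case h: (adj t u v) => //; move: (adj_lt h); rewrite ltnNge hu.
Qed.

Lemma first_clique u : 0 < n -> u < k -> u \in C 1.
Proof.
move=> hn hu; have [uS szS lt_S _] := clique_step hn.
have sub : {subset C 1 <= iota 0 k} by move=> z /lt_S; rewrite mem_iota addn0.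
have [|_ ->] := uniq_min_size uS sub; first by rewrite size_iota szS.
by rewrite mem_iota.
Qed.

Lemma deg_lb t u : 0 < t <= n -> u < k + t -> k <= deg t u.
Proof.
elim: t u => [|t IH] u // /andP [_ ltn_t] hu.
rewrite deg_step //; case: (ltngtP u (k + t)) => [hlt|hgt|->]; last first.
- by rewrite deg_out // new_vertex_notin // mul1n add0n addn0.
- lia.
case: t IH ltn_t hu hlt => [|t] IH ltn_t hu hlt.
  by rewrite addn0 in hlt; rewrite deg0 // first_clique //; lia.
by have := IH u (ltnW ltn_t) hlt; lia.
Qed.

Lemma link_lb t u : t <= n -> u < k + t -> k.-1 * deg t u <= link t u + 'C(k, 2).
Proof.
elim: t u => [|t IH] u tn hu.
  rewrite addn0 in hu; rewrite deg0 //.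
  by have := bin2_mul2 k; have := bin2_mul2 k.-1; have := link0 hu; nia.
rewrite deg_step //; case: (ltngtP u (k + t)) => [hlt|hgt|->]; last first.
- rewrite deg_out // new_vertex_notin // mul1n add0n addn0.
  by have := link_new_vertex tn; have := bin2_mul2 k; nia.
- lia.
have := IH u (ltnW tn) hlt; rewrite mul0n addn0.
case uS: (u \in C t.+1).
- by have := link_step tn uS; lia.
- by have := link_succ tn u; lia.
Qed.

Lemma sum_deg t : t <= n -> \sum_(0 <= u < k + n) deg t u = k * k.-1 + 2 * k * t.
Proof.
elim: t => [_|t IH tn].
  transitivity (\sum_(0 <= u < k + n) (u \in iota 0 k) * k.-1).
    apply: eq_bigr => u _; rewrite mem_iota add0n /=.
    by case: (ltnP u k) => hu; [rewrite deg0 ?mul1n | rewrite deg_out ?mul0n // addn0].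
  rewrite -big_distrl /= sum_mem_nat ?iota_uniq ?size_iota ?muln0 ?addn0 //.
  by apply/allP => z; rewrite mem_iota; lia.
have [uS szS _ _] := clique_step tn.
under eq_bigr => u _ do rewrite deg_step //.
rewrite !big_split /= IH 1?ltnW // -big_distrl /= sum_eq_nat; last by lia.
by rewrite sum_mem_nat ?szS ?clique_in_range //; lia.
Qed.

End RandomKTree.

Section RealBounds.

Local Open Scope ring_scope.

Lemma local_cc_lb (R : realFieldType) (k D E : nat) : (2 <= k)%N -> (k <= D)%N ->
  (k.-1 * D <= E + 'C(k, 2))%N -> 1 - D%:R / (4 * k)%:R <= E%:R / 'C(D, 2)%:R :> R.
Proof.
move=> k2 kD hE.
have pred_natr m : (0 < m)%N -> m.-1%:R = m%:R - 1 :> R.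
  by case: m => // m _; rewrite -natr1 addrK.
have D1 := pred_natr D (leq_trans (ltnW k2) kD).
have k1 := pred_natr k (ltnW k2).
have hb : 'C(D, 2)%:R * 2 = D%:R * (D%:R - 1) :> R.
  by rewrite -D1 -!natrM bin2_mul2.
have hkk : 'C(k, 2)%:R * 2 = k%:R * (k%:R - 1) :> R.
  by rewrite -k1 -!natrM bin2_mul2.
have hb0 : 0 < 'C(D, 2)%:R :> R by rewrite ltr0n bin_gt0; lia.
move: k2 kD hE; rewrite -!(ler_nat R) natrD !natrM k1.
set b := 'C(D, 2)%:R in hb hb0 *; set d := D%:R in D1 hb *.
set c := 'C(k, 2)%:R in hkk *; set r := k%:R in k1 hkk *; set e := E%:R.
move=> k2 kD hE.
have key : (4 * r - d) * b <= 4 * r * e.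
  (* 4r(r-1)(2d-r) - (4r-d)d(d-1) = (d-1)(d-2r)^2 + 4r(d-r)(r-2) *)
  have h1 : 0 <= (d - 1) * (d - 2 * r) ^+ 2 by rewrite mulr_ge0 ?sqr_ge0 //; lra.
  have h2 : 0 <= r * (d - r) * (r - 2) by rewrite !mulr_ge0 //; lra.
  nra.
rewrite -subr_ge0.
have -> : e / b - (1 - d / (4 * r)) = (4 * r * e - (4 * r - d) * b) / (4 * r * b).
  by field; rewrite !gt_eqF //; lra.
by rewrite divr_ge0 ?subr_ge0 // ltW // !mulr_gt0 //; lra.
Qed.

Lemma mean_ge_half (R : realFieldType) (N : nat) (K : R) (f g : 'I_N -> R) :
  (0 < N)%N -> 0 < K -> (forall u, 1 - g u / K <= f u) ->
  \sum_u g u <= K * N%:R / 2 -> 1 / 2 <= N%:R^-1 * \sum_u f u.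
Proof.
move=> hN hK hfg hg.
have hN0 : 0 < N%:R :> R by rewrite ltr0n.
have lb_f : N%:R - (\sum_u g u) / K <= \sum_u f u.
  have -> : N%:R = \sum_(u < N) (1 : R) by rewrite sumr_const card_ord.
  by rewrite mulr_suml -sumrB; apply: ler_sum.
have ub_g : (\sum_u g u) / K <= N%:R / 2 by rewrite ler_pdivrMr // mulrC mulrA.
by rewrite ler_pdivlMl //; lra.
Qed.

End RealBounds.

Theorem proposition4 (k : nat) (hk : 2 <= k) (C : nat -> seq nat) (n : nat)
  (hn : 0 < n) (hC : valid_realization k C n) :
  (1 / 2 <= clustering_coeff (k + n) (ktree_adj k C n))%R.
Proof.
apply: (mean_ge_half (K := (4 * k)%:R%R) (g := fun u => (deg k C n n u)%:R%R)).
- by rewrite addn_gt0 hn orbT.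
- by rewrite ltr0n muln_gt0 (ltnW hk).
- move=> u; rewrite degree_sum nbr_edges_sum.
  have ltu := ltn_ord u.
  apply: local_cc_lb => //.
  - by apply: (deg_lb hC) ltu; rewrite hn leqnn.
  - exact: (link_lb hC).
- rewrite -natr_sum -(big_mkord xpredT (deg k C n n)) sum_deg //.
  by rewrite ler_pdivlMr // -!natrM ler_nat; nia.
Qed.
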